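(* Let $l\geq 1$ and $m\geq 1$ be integers. Then for each of the following five choices of $(d_1,d_2,\beta)$ there is a constant $C>0$ such that for all distribution functions $F$ and $G$ of probability distributions supported on $\mathbb{Z}$, \[ d_1(\bar F^m,\bar G^m)\leq C\, d_2(F,G)^{1-\beta}\,\bigl(\|\Delta^{l+1}\bar F^m\|_1+\|\Delta^{l+1}\bar G^m\|_1\bigr)^{\beta}: \] (i) $d_1=d_{\mathrm{loc}}$, $d_2=d_{\mathrm{TV}}$, $\beta=1/l$; (ii) $d_1=d_{\mathrm{loc}}$, $d_2=d_{\mathrm{K}}$, $\beta=1/l$; (iii) $d_1=d_{\mathrm{loc}}$, $d_2=d_{\mathrm{W}}$, $\beta=2/(l+1)$; (iv) $d_1=d_{\mathrm{TV}}$, $d_2=d_{\mathrm{W}}$, $\beta=1/(l+1)$; (v) $d_1=d_{\mathrm{K}}$, $d_2=d_{\mathrm{W}}$, $\beta=1/(l+1)$.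
   Context: For $f:\mathbb{Z}\to\mathbb{R}$, $\|f\|_p=(\sum_{i\in\mathbb{Z}}|f(i)|^p)^{1/p}$ for $1\le p<\infty$ and $\|f\|_\infty=\sup_{i\in\mathbb{Z}}|f(i)|$. Difference operators: $\Delta^0 f(k)=f(k)$, $\Delta^{n+1}f(k)=\Delta^n f(k+1)-\Delta^n f(k)$; write $\Delta=\Delta^1$. The distribution function of an integer-supported distribution is $F(j)=\mathbb{P}[X\le j]$, $j\in\mathbb{Z}$. For a positive integer $m$, $\bar F^m(j)=\frac{F(j)+F(j-1)+\dots+F(j-m+1)}{m}$ (so $\bar F^1=F$). For functions $F,G$ on $\mathbb{Z}$: $d_{\mathrm{K}}(F,G)=\|F-G\|_\infty$, $d_{\mathrm{W}}(F,G)=\|F-G\|_1$, $d_{\mathrm{loc}}(F,G)=\|\Delta F-\Delta G\|_\infty$, $d_{\mathrm{TV}}(F,G)=\frac12\|\Delta F-\Delta G\|_1$. *)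

From HB Require Import structures.
From mathcomp Require Import all_boot all_order all_algebra.
From mathcomp Require Import all_classical all_reals all_analysis.
Set Implicit Arguments. Unset Strict Implicit. Unset Printing Implicit Defensive.
Import Order.TTheory GRing.Theory Num.Theory.
Local Open Scope classical_set_scope.
Local Open Scope ring_scope.

Section Defs.
Variable R : realType.

Definition norm1 (f : int -> R) : \bar R :=
  (\esum_(i in [set: int]) (`|f i|)%:E)%E.

Definition normInf (f : int -> R) : \bar R :=
  ereal_sup [set (`|f i|)%:E | i in [set: int]].

Definition Delta (f : int -> R) : int -> R := fun k => f (k + 1) - f k.
Definition DeltaN (n : nat) (f : int -> R) : int -> R := iter n Delta f.

Definition is_distr_fun (F : int -> R) : Prop :=
  exists p : int -> R,
    (forall i, 0 <= p i) /\
    (\esum_(i in [set: int]) (p i)%:E = 1)%E /\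
    (forall j, (F j)%:E = \esum_(i in [set i | (i <= j)%R]) (p i)%:E)%E.

Definition barF (m : nat) (F : int -> R) : int -> R :=
  fun j => (\sum_(i < m) F (j - (i : nat)%:Z)) / m%:R.

Definition dK (F G : int -> R) : \bar R := normInf (fun j => F j - G j).
Definition dW (F G : int -> R) : \bar R := norm1 (fun j => F j - G j).
Definition dloc (F G : int -> R) : \bar R :=
  normInf (fun j => Delta F j - Delta G j).
Definition dTV (F G : int -> R) : \bar R :=
  ((2^-1)%:E * norm1 (fun j => (Delta F j - Delta G j)%R))%E.

Definition smoothing_bound (d1 d2 : (int -> R) -> (int -> R) -> \bar R)
  (beta : R) (l m : nat) : Prop :=
  exists C : R, 0 < C /\
    forall F G : int -> R, is_distr_fun F -> is_distr_fun G ->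
      (d1 (barF m F) (barF m G) <=
        C%:E * poweR (d2 F G) (1 - beta)%R *
        poweR (norm1 (DeltaN l.+1 (barF m F)) + norm1 (DeltaN l.+1 (barF m G)))
              beta)%E.
End Defs.

From HB Require Import structures.
From mathcomp Require Import all_boot all_order all_algebra ring lra zify.
From mathcomp Require Import all_classical all_reals all_analysis.
Set Implicit Arguments. Unset Strict Implicit. Unset Printing Implicit Defensive.
Import Order.TTheory GRing.Theory Num.Theory.
Local Open Scope ring_scope.

(* Write h = \bar F^m - \bar G^m, E f = f (_ + 1) for the shift and
   Delta = E - 1.  For an integer s >= 1 the average M = (1 + E + ... + E^(s-1))/s
   satisfies 1 - M = - Q Delta, where Q has l^1 operator norm at most s, while
   M maps l^1 to l^oo with norm 1/s and Delta M = (E^s - 1)/s.  Applying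
   1 = (1 - M)^n + M (1 + (1 - M) + ... + (1 - M)^(n-1)) to h or Delta h bounds
   it by s^k ||Delta^(l+1) h||_1 plus d_2(F, G)/s (or /s^2, using M^2 instead
   of M, for d_W and d_loc), up to constants.  Choosing s to balance the two terms
   gives the interpolation inequality.  The extended-real degenerate cases use
   |h| <= 1 and that Delta^(l+1) \bar F^m does not vanish identically. *)

Section ShiftAction.
Variable R : realFieldType.
Implicit Types (p q : {poly R}) (f g : int -> R).

(* [shift_act p] is the operator [p(E)], where [E f = f (_ + 1)]. *)
Definition shift_act p f : int -> R :=
  fun j => \sum_(i < size p) p`_i * f (j + (i : nat)%:Z).

Lemma shift_act_widen p f j n : (size p <= n)%N ->
  shift_act p f j = \sum_(i < n) p`_i * f (j + (i : nat)%:Z).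
Proof.
move=> hn; rewrite /shift_act (big_ord_widen _ (fun i => p`_i * f (j + i%:Z)) hn).
rewrite [RHS](bigID (fun i : 'I_n => (i < size p)%N)) /=.
rewrite [X in _ = _ + X]big1 ?addr0 // => i; rewrite -leqNgt => hi.
by rewrite nth_default // mul0r.
Qed.

Lemma shift_act0 f j : shift_act 0 f j = 0.
Proof. by rewrite /shift_act size_poly0 big_ord0. Qed.

Lemma shift_actD p q f j :
  shift_act (p + q) f j = shift_act p f j + shift_act q f j.
Proof.
pose n := maxn (size p) (size q).
rewrite (@shift_act_widen (p + q) f j n) ?(@shift_act_widen p f j n)
  ?(@shift_act_widen q f j n) ?leq_maxl ?leq_maxr //; last first.
  exact: leq_trans (size_polyD _ _) _.
by rewrite -big_split /=; apply: eq_bigr => i _; rewrite coefD mulrDl.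
Qed.

Lemma shift_actC c f j : shift_act c%:P f j = c * f j.
Proof.
rewrite (@shift_act_widen _ _ _ 1) ?size_polyC ?leq_b1 // big_ord1 coefC /=.
by rewrite addr0.
Qed.

Lemma shift_actCM c p f j : shift_act (c%:P * p) f j = c * shift_act p f j.
Proof.
have [->|c0] := eqVneq c 0; first by rewrite mul0r shift_act0 mul0r.
rewrite /shift_act size_Cmul // mulr_sumr.
by apply: eq_bigr => i _; rewrite coefCM mulrA.
Qed.

Lemma shift_actXM p f j : shift_act ('X * p) f j = shift_act p f (j + 1).
Proof.
have [->|p0] := eqVneq p 0; first by rewrite mulr0 !shift_act0.
rewrite /shift_act mulrC size_mulX // -mulrC big_ord_recl coefXM /= mul0r add0r.
apply: eq_bigr => i _; rewrite coefXM /=; congr (_ * f _).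
by rewrite /bump /= add1n -addn1 PoszD addrA [X in _ = X](addrAC j).
Qed.

Lemma shift_act_translate p f j k :
  shift_act p (fun i => f (i + k)) j = shift_act p f (j + k).
Proof. by apply: eq_bigr => i _; rewrite addrAC. Qed.

Lemma shift_actM p q f : shift_act (p * q) f = shift_act p (shift_act q f).
Proof.
apply: funext => j; elim/poly_ind: p q f j => [|p c IH] q f j.
  by rewrite mul0r !shift_act0.
rewrite mulrDl !shift_actD shift_actCM shift_actC -mulrA IH [p * 'X]mulrC.
congr (_ + _); rewrite shift_actXM -shift_act_translate.
by congr (shift_act _ _ _); apply: funext => k; rewrite shift_actXM.
Qed.

Lemma shift_act1 f j : shift_act 1 f j = f j.
Proof. by rewrite -polyC1 shift_actC mul1r. Qed.

Lemma shift_actXn n f j : shift_act 'X^n f j = f (j + n%:Z).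
Proof.
elim: n j => [|n IH] j; first by rewrite expr0 shift_act1 addr0.
by rewrite exprS shift_actXM IH -addrA -PoszD add1n.
Qed.

Lemma shift_act_sum I (r : seq I) (P : pred I) (F : I -> {poly R}) f j :
  shift_act (\sum_(i <- r | P i) F i) f j = \sum_(i <- r | P i) shift_act (F i) f j.
Proof.
elim/big_rec2: _ => [|i y p _ <-]; first by rewrite shift_act0.
by rewrite shift_actD.
Qed.

Lemma shift_actBr p f g j :
  shift_act p (fun k => f k - g k) j = shift_act p f j - shift_act p g j.
Proof. by rewrite /shift_act -sumrB; apply: eq_bigr => i _; rewrite mulrBr. Qed.

End ShiftAction.

Section ShiftBounds.
Variable R : realFieldType.
Implicit Types (p q : {poly R}) (f g : int -> R).

Definition supnorm_le f b := forall j, `|f j| <= b.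

Definition l1norm_le f b :=
  forall (a : int) (n : nat), \sum_(t < n) `|f (a + (t : nat)%:Z)| <= b.

(* [N f b] reads "||f|| <= b" for a translation-invariant seminorm. *)
Record shift_bound := ShiftBound {
  bounded :> (int -> R) -> R -> Prop;
  bounded_ge0 : forall f b, bounded f b -> 0 <= b;
  bounded_le : forall f b b', bounded f b -> b <= b' -> bounded f b';
  bounded0 : bounded (fun=> 0) 0;
  boundedD : forall f g a b, bounded f a -> bounded g b ->
    bounded (fun j => f j + g j) (a + b);
  boundedZ : forall c f b, bounded f b -> bounded (fun j => c * f j) (`|c| * b);
  bounded_translate : forall k f b, bounded f b -> bounded (fun j => f (j + k)) b }.

Implicit Types N : shift_bound.

Lemma eq_bounded N f g b : f =1 g -> N f b -> N g b.
Proof. by move/funext->. Qed.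

Lemma supnorm_le_ge0 f b : supnorm_le f b -> 0 <= b.
Proof. by move=> h; apply: le_trans (h 0). Qed.

Lemma l1norm_le_ge0 f b : l1norm_le f b -> 0 <= b.
Proof. by move=> h; apply: le_trans (h 0 0%N); rewrite big_ord0. Qed.

Lemma l1norm_le_supnorm f b : l1norm_le f b -> supnorm_le f b.
Proof. by move=> h j; have := h j 1%N; rewrite big_ord1 addr0. Qed.

Definition sup_bound : shift_bound.
Proof.
refine (@ShiftBound supnorm_le supnorm_le_ge0 _ _ _ _ _).
- by move=> f b b' h hb j; apply: le_trans (h j) hb.
- by move=> j; rewrite normr0.
- by move=> f g a b hf hg j; apply: le_trans (ler_normD _ _) _; apply: lerD.
- by move=> c f b h j; rewrite normrM ler_wpM2l.
- by move=> k f b h j.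
Defined.

Definition l1_bound : shift_bound.
Proof.
refine (@ShiftBound l1norm_le l1norm_le_ge0 _ _ _ _ _).
- by move=> f b b' h hb a n; apply: le_trans (h a n) hb.
- by move=> a n; rewrite big1 // => t _; rewrite normr0.
- move=> f g a b hf hg c n; apply: le_trans (lerD (hf c n) (hg c n)).
  by rewrite -big_split ler_sum // => t _; apply: ler_normD.
- move=> c f b h a n; under eq_bigr do rewrite normrM.
  by rewrite -mulr_sumr ler_wpM2l.
- by move=> k f b h a n; under eq_bigr do rewrite addrAC; apply: h.
Defined.

Definition op_bound (N1 N2 : shift_bound) p c :=
  forall f b, N1 f b -> N2 (shift_act p f) (c * b).

Lemma op_bound_le (N1 N2 : shift_bound) p c c' :
  op_bound N1 N2 p c -> c <= c' -> op_bound N1 N2 p c'.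
Proof.
move=> h hc f b hf; apply: bounded_le (h f b hf) _.
by rewrite ler_wpM2r // (bounded_ge0 hf).
Qed.

Lemma op_boundM (N1 N2 N3 : shift_bound) p q c1 c2 :
  op_bound N2 N3 p c1 -> op_bound N1 N2 q c2 -> op_bound N1 N3 (p * q) (c1 * c2).
Proof. by move=> hp hq f b hf; rewrite shift_actM -mulrA; apply/hp/hq. Qed.

Lemma op_boundD (N1 N2 : shift_bound) p q c1 c2 :
  op_bound N1 N2 p c1 -> op_bound N1 N2 q c2 -> op_bound N1 N2 (p + q) (c1 + c2).
Proof.
move=> hp hq f b hf; rewrite mulrDl.
by apply: eq_bounded (boundedD (hp f b hf) (hq f b hf)) => j; rewrite shift_actD.
Qed.

Lemma op_boundCM (N1 N2 : shift_bound) c p k :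
  op_bound N1 N2 p k -> op_bound N1 N2 (c%:P * p) (`|c| * k).
Proof.
move=> h f b hf; rewrite -mulrA.
by apply: eq_bounded (boundedZ c (h f b hf)) => j; rewrite shift_actCM.
Qed.

Lemma op_boundN (N1 N2 : shift_bound) p c :
  op_bound N1 N2 p c -> op_bound N1 N2 (- p) c.
Proof.
move=> /(op_boundCM (-1)); rewrite normrN1 mul1r.
by rewrite polyCN polyC1 mulN1r.
Qed.

Lemma op_bound_sum (N1 N2 : shift_bound) n (F : nat -> {poly R}) c :
  (forall i, (i < n)%N -> op_bound N1 N2 (F i) c) ->
  op_bound N1 N2 (\sum_(i < n) F i) (n%:R * c).
Proof.
elim: n => [|n IH] h.
  rewrite big_ord0 mul0r => f b hf; rewrite mul0r.
  by apply: eq_bounded (bounded0 N2) => j; rewrite shift_act0.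
rewrite big_ord_recr /= -addn1 natrD mulrDl mul1r; apply: op_boundD.
  by apply: IH => i hi; apply: h; rewrite ltnS ltnW.
exact: h.
Qed.

Lemma op_boundXn N n : op_bound N N 'X^n 1.
Proof.
move=> f b hf; rewrite mul1r.
by apply: eq_bounded (bounded_translate n%:Z hf) => j; rewrite shift_actXn.
Qed.

Lemma op_bound1 N : op_bound N N 1 1.
Proof. by rewrite -(expr0 'X); apply: op_boundXn. Qed.

Lemma op_bound_exp N p c n : op_bound N N p c -> op_bound N N (p ^+ n) (c ^+ n).
Proof.
move=> h; elim: n => [|n IH]; first by rewrite !expr0; apply: op_bound1.
by rewrite !exprS; apply: op_boundM h IH.
Qed.

End ShiftBounds.

Section Smoothing.
Variable R : realFieldType.
Implicit Types (p B : {poly R}) (f h : int -> R) (N : shift_bound R).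

Definition diffp : {poly R} := 'X - 1.

Definition geom_sum B n := \sum_(i < n) (1 - B) ^+ i.

Lemma geom_sum_split B n : 1 = (1 - B) ^+ n + B * geom_sum B n.
Proof.
have := subrX1 (1 - B) n; rewrite /geom_sum addrAC subrr add0r mulNr => h.
by rewrite -[B * _]opprK -h opprB addrC subrK.
Qed.

Lemma op_bound_diff N : op_bound N N diffp 2.
Proof.
have := op_boundD (op_boundXn (N:=N) 1) (op_boundN (op_bound1 (N:=N))).
by rewrite expr1.
Qed.

Lemma op_bound_geom_sum N B n :
  op_bound N N (1 - B) 2 -> op_bound N N (geom_sum B n) (n%:R * 2 ^+ n).
Proof.
move=> h; rewrite /geom_sum.
apply: (op_bound_sum (F := fun i => (1 - B) ^+ i)) => i hi.
apply: op_bound_le (op_bound_exp i h) _.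
by rewrite ler_weXn2l // ?ler1n // ltnW.
Qed.

Lemma bounded_split N1 N1' N2 p B n k r h A D c1 c2 :
  p * (1 - B) ^+ n = r * diffp ^+ k ->
  op_bound N1 N2 r c1 -> op_bound N1' N2 (p * (B * geom_sum B n)) c2 ->
  N1 (shift_act (diffp ^+ k) h) A -> N1' h D ->
  N2 (shift_act p h) (c1 * A + c2 * D).
Proof.
move=> e hr hB hA hD.
apply: eq_bounded (boundedD (hr _ _ hA) (hB _ _ hD)) => j.
by rewrite -shift_actM -e -shift_actD -mulrDr -geom_sum_split mulr1.
Qed.

Lemma bounded_le_mul N f x y K u v :
  N f (x + y) -> x <= K * u -> y <= K * v -> N f (K * (u + v)).
Proof. by move=> h hx hy; apply: bounded_le h _; rewrite mulrDr lerD. Qed.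

Variables (s : nat) (s_gt0 : (0 < s)%N).

Definition meanp : {poly R} := (s%:R^-1)%:P * \sum_(i < s) 'X^i.
Definition meanq : {poly R} := (s%:R^-1)%:P * \sum_(i < s) \sum_(r < i) 'X^r.

Let s_neq0 : (s%:R : R) != 0. Proof. by rewrite pnatr_eq0 -lt0n. Qed.
Let norm_invs : `|(s%:R : R)^-1| = s%:R^-1.
Proof. by rewrite ger0_norm // invr_ge0 ler0n. Qed.

Lemma diff_meanq : diffp * meanq = meanp - 1.
Proof.
rewrite /diffp /meanq mulrCA mulr_sumr.
under eq_bigr do rewrite -subrX1.
rewrite sumrB mulrBr -/meanp sumr_const card_ord.
by rewrite -polyC_natr -polyCM mulVf // polyC1.
Qed.

Lemma one_sub_mean : 1 - meanp = - meanq * diffp.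
Proof. by rewrite mulNr mulrC diff_meanq opprB. Qed.

Lemma one_sub_mean2 : 1 - meanp * meanp = - meanq * (1 + meanp) * diffp.
Proof.
have -> : 1 - meanp * meanp = (1 - meanp) * (1 + meanp) by ring.
by rewrite one_sub_mean; ring.
Qed.

Lemma diff_mean : diffp * meanp = (s%:R^-1)%:P * ('X^s - 1).
Proof. by rewrite /diffp /meanp mulrCA subrX1. Qed.

Lemma op_bound_mean N : op_bound N N meanp 1.
Proof.
apply: op_bound_le (op_boundCM _ (op_bound_sum (fun i _ => op_boundXn (N:=N) i))) _.
by rewrite norm_invs mulr1 mulVf.
Qed.

Lemma op_bound_meanq N : op_bound N N meanq s%:R.
Proof.
have h : op_bound N N (\sum_(i < s) \sum_(r < i) 'X^r) (s%:R * s%:R).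
  apply: (op_bound_sum (F := fun i : nat => \sum_(r < i) 'X^r)) => i hi.
  apply: op_bound_le (op_bound_sum (fun r _ => op_boundXn (N:=N) r)) _.
  by rewrite mulr1 ler_nat ltnW.
by apply: op_bound_le (op_boundCM _ h) _; rewrite norm_invs mulrA mulVf ?mul1r.
Qed.

Lemma op_bound_diff_mean N : op_bound N N (diffp * meanp) (s%:R^-1 * 2).
Proof.
rewrite diff_mean.
have h := op_boundD (op_boundXn (N:=N) s) (op_boundN (op_bound1 (N:=N))).
by apply: op_bound_le (op_boundCM _ h) _; rewrite norm_invs.
Qed.

Lemma mean_l1_sup : op_bound (l1_bound R) (sup_bound R) meanp s%:R^-1.
Proof.
move=> f b hf j /=; rewrite /meanp shift_actCM shift_act_sum normrM norm_invs.
rewrite ler_wpM2l ?invr_ge0 ?ler0n //; apply: le_trans (ler_norm_sum _ _ _) _.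
by under eq_bigr do rewrite shift_actXn; apply: hf.
Qed.

Lemma meanq_l1_sup : op_bound (l1_bound R) (sup_bound R) meanq 1.
Proof.
move=> f b hf j /=; rewrite /meanq shift_actCM shift_act_sum normrM norm_invs.
apply: le_trans (_ : s%:R^-1 * \sum_(i < s) b <= _).
  rewrite ler_wpM2l ?invr_ge0 ?ler0n //.
  apply: le_trans (ler_norm_sum _ _ _) _; apply: ler_sum => i _.
  rewrite shift_act_sum; apply: le_trans (ler_norm_sum _ _ _) _.
  by under eq_bigr do rewrite shift_actXn; apply: hf.
by rewrite sumr_const card_ord -[b *+ s]mulr_natl mulrA mulVf ?mul1r.
Qed.

End Smoothing.

Arguments diffp {R}.
Arguments meanp {R} s.
Arguments meanq {R} s.

Section SmoothingEstimates.
Variable R : realFieldType.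
Implicit Types (f g h : int -> R) (N : shift_bound R).

(* A common bound for the constants in the four estimates below. *)
Definition smoothing_const k : R := k.+1%:R * 2 ^+ k.+2.

Lemma smoothing_const_ge k :
  [/\ 2 <= smoothing_const k, 2 ^+ k.+1 <= smoothing_const k,
      k.+1%:R * 2 ^+ k.+1 <= smoothing_const k,
      2 * (k.+1%:R * 2 ^+ k.+1) <= smoothing_const k &
      2 * (k%:R * 2 ^+ k) <= smoothing_const k].
Proof.
have e : smoothing_const k = 2 * (k.+1%:R * 2 ^+ k.+1).
  by rewrite /smoothing_const exprS; ring.
have h1 : (1 : R) <= k.+1%:R by rewrite ler1n.
have h2 : (2 : R) <= 2 ^+ k.+1 by rewrite exprS ler_peMr // exprn_ege1 // ler1n.
have h3 : (k%:R * 2 ^+ k : R) <= k.+1%:R * 2 ^+ k.+1.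
  apply: ler_pM; rewrite ?ler0n ?exprn_ge0 ?ler_nat //.
  by apply: ler_weXn2l; rewrite ?ler1n.
rewrite e; split; nra.
Qed.

Lemma smoothing_const_ge1 k : 1 <= smoothing_const k.
Proof.
by have [+ _ _ _ _] := smoothing_const_ge k; apply: le_trans; rewrite ler1n.
Qed.

Lemma le_mul_const (x c K u : R) : x = c * u -> 0 <= u -> c <= K -> x <= K * u.
Proof. by move=> -> u0 cK; rewrite ler_wpM2r. Qed.

Variables (s : nat) (s_gt0 : (0 < s)%N).

Local Notation l1 := (l1_bound R).
Local Notation sup := (sup_bound R).
Local Notation M := (@meanp R s).
Local Notation Q := (@meanq R s).

Let op_bound_one_sub_mean N : op_bound N N (1 - M) 2.
Proof.
by have := op_boundD (op_bound1 (N:=N)) (op_boundN (op_bound_mean (N:=N) s_gt0)).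
Qed.

Lemma op_bound_meanq_exp k : op_bound l1 sup ((- Q) ^+ k.+1) (s%:R ^+ k).
Proof.
rewrite exprS -[s%:R ^+ k]mul1r.
exact: op_boundM (op_boundN (meanq_l1_sup (R:=R) s_gt0))
                 (op_bound_exp k (op_boundN (op_bound_meanq (N:=l1) s_gt0))).
Qed.

Lemma sup_le_smooth_l1 k g (D A : R) :
  l1norm_le g D -> l1norm_le (shift_act (diffp ^+ k.+1) g) A ->
  supnorm_le g (smoothing_const k * (s%:R ^+ k * A + D / s%:R)).
Proof.
move=> hD hA; have c1 := smoothing_const_ge1 k.
have [_ _ c2 _ _] := smoothing_const_ge k.
have e : 1 * (1 - M) ^+ k.+1 = (- Q) ^+ k.+1 * diffp ^+ k.+1.
  by rewrite mul1r one_sub_mean // exprMn.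
have hB := op_boundM (mean_l1_sup (R:=R) s)
             (op_bound_geom_sum k.+1 (op_bound_one_sub_mean (N:=l1))).
rewrite -[M * _]mul1r in hB.
have := bounded_split e (op_bound_meanq_exp k) hB hA hD.
move/(eq_bounded (shift_act1 g)) => hs.
have A0 := l1norm_le_ge0 hA; have D0 := l1norm_le_ge0 hD.
apply: bounded_le_mul hs _ _; first by apply: (le_mul_const _ _ c1);
  rewrite ?mulr_ge0 ?exprn_ge0 ?ler0n //; ring.
by apply: (le_mul_const _ _ c2); rewrite ?divr_ge0 ?ler0n //; ring.
Qed.

Lemma sup_diff_le_smooth_sup k h (D A : R) :
  supnorm_le h D -> l1norm_le (shift_act (diffp ^+ k.+2) h) A ->
  supnorm_le (shift_act diffp h) (smoothing_const k * (s%:R ^+ k * A + D / s%:R)).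
Proof.
move=> hD hA; have c1 := smoothing_const_ge1 k.
have [_ _ _ c2 _] := smoothing_const_ge k.
have e : diffp * (1 - M) ^+ k.+1 = (- Q) ^+ k.+1 * diffp ^+ k.+2.
  by rewrite one_sub_mean // exprMn [diffp ^+ k.+2]exprS; ring.
have hB := op_boundM (op_bound_diff_mean (N:=sup) s)
             (op_bound_geom_sum k.+1 (op_bound_one_sub_mean (N:=sup))).
rewrite -[_ * geom_sum _ _]mulrA in hB.
have hs := bounded_split e (op_bound_meanq_exp k) hB hA hD.
have A0 := l1norm_le_ge0 hA; have D0 := supnorm_le_ge0 hD.
apply: bounded_le_mul hs _ _; first by apply: (le_mul_const _ _ c1);
  rewrite ?mulr_ge0 ?exprn_ge0 ?ler0n //; ring.
by apply: (le_mul_const _ _ c2); rewrite ?divr_ge0 ?ler0n //; ring.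
Qed.

Lemma sup_diff_le_smooth_l1 k h (D A : R) :
  l1norm_le h D -> l1norm_le (shift_act (diffp ^+ k.+2) h) A ->
  supnorm_le (shift_act diffp h)
    (smoothing_const k * (s%:R ^+ k * A + D / s%:R ^+ 2)).
Proof.
move=> hD hA; have [_ c1 _ c2 _] := smoothing_const_ge k.
have e : diffp * (1 - M * M) ^+ k.+1 =
    ((- Q) ^+ k.+1 * (1 + M) ^+ k.+1) * diffp ^+ k.+2.
  by rewrite one_sub_mean2 // !exprMn [diffp ^+ k.+2]exprS; ring.
have h1pM : op_bound l1 l1 (1 + M) 2.
  by have := op_boundD (op_bound1 (N:=l1)) (op_bound_mean (N:=l1) s_gt0).
have h1MM : op_bound l1 l1 (1 - M * M) 2.
  have := op_boundD (op_bound1 (N:=l1)) (op_boundN (op_boundM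
            (op_bound_mean (N:=l1) s_gt0) (op_bound_mean (N:=l1) s_gt0))).
  by rewrite mulr1.
have hr := op_boundM (op_bound_meanq_exp k) (op_bound_exp k.+1 h1pM).
have hB := op_boundM (op_bound_diff_mean (N:=sup) s)
             (op_boundM (mean_l1_sup (R:=R) s) (op_bound_geom_sum k.+1 h1MM)).
have e2 : diffp * M * (M * geom_sum (M * M) k.+1) =
    diffp * (M * M * geom_sum (M * M) k.+1) by rewrite !mulrA.
rewrite e2 in hB.
have hs := bounded_split e hr hB hA hD.
have A0 := l1norm_le_ge0 hA; have D0 := l1norm_le_ge0 hD.
apply: bounded_le_mul hs _ _; first by apply: (le_mul_const _ _ c1);
  rewrite ?mulr_ge0 ?exprn_ge0 ?ler0n //; ring.
apply: (le_mul_const _ _ c2); rewrite ?divr_ge0 ?exprn_ge0 ?ler0n //.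
by rewrite -exprVn; ring.
Qed.

Lemma l1_diff_le_smooth_l1 k h (D A : R) :
  l1norm_le h D -> l1norm_le (shift_act (diffp ^+ k.+1) h) A ->
  l1norm_le (shift_act diffp h) (smoothing_const k * (s%:R ^+ k * A + D / s%:R)).
Proof.
move=> hD hA; have c1 := smoothing_const_ge1 k.
have [_ _ _ _ c2] := smoothing_const_ge k.
have e : diffp * (1 - M) ^+ k = (- Q) ^+ k * diffp ^+ k.+1.
  by rewrite one_sub_mean // exprMn [diffp ^+ k.+1]exprS; ring.
have hr := op_bound_exp k (op_boundN (op_bound_meanq (N:=l1) s_gt0)).
have hB := op_boundM (op_bound_diff_mean (N:=l1) s)
             (op_bound_geom_sum k (op_bound_one_sub_mean (N:=l1))).
rewrite -[_ * geom_sum _ _]mulrA in hB.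
have hs := bounded_split e hr hB hA hD.
have A0 := l1norm_le_ge0 hA; have D0 := l1norm_le_ge0 hD.
apply: bounded_le_mul hs _ _; first by apply: (le_mul_const _ _ c1);
  rewrite ?mulr_ge0 ?exprn_ge0 ?ler0n //; ring.
by apply: (le_mul_const _ _ c2); rewrite ?divr_ge0 ?ler0n //; ring.
Qed.

End SmoothingEstimates.

Arguments smoothing_const {R} k.

Section Archimedean.
Variable R : archiFieldType.

Lemma le0_le_div_nat (x c : R) :
  (forall s : nat, (0 < s)%N -> x <= c / s%:R) -> x <= 0.
Proof.
move=> h; rewrite leNgt; apply/negP => x0.
have c0 : 0 < c by have := h 1%N isT; rewrite divr1 => /(lt_le_trans x0).
have hb := archi_boundP (ltW (divr_gt0 c0 x0)).
set n := Num.Def.archi_bound (c / x) in hb.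
have hc := h n.+1 isT; rewrite ler_pdivlMr ?ltr0n // in hc.
rewrite ltr_pdivrMr // in hb.
have hn : (n%:R : R) <= n.+1%:R by rewrite ler_nat.
have : x * n%:R <= x * n.+1%:R by rewrite ler_pM2l.
lra.
Qed.

(* The least [s] with [D <= s ^ n * A] has [(s - 1) ^ n * A < D] and
   [s <= 2 (s - 1)]. *)
Lemma exists_scale_between (D A : R) n : (0 < n)%N -> 0 < A -> A < D ->
  exists2 s : nat, (0 < s)%N & D <= s%:R ^+ n * A <= 2 ^+ n * D.
Proof.
move=> n0 A0 AD; have D0 : 0 < D by apply: lt_trans AD.
pose P k := (0 < k)%N && (D <= k%:R ^+ n * A).
have exP : exists k, P k.
  have hb := archi_boundP (ltW (divr_gt0 D0 A0)).
  set k := Num.Def.archi_bound (D / A) in hb; exists k.+1; rewrite /P /=.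
  rewrite ltr_pdivrMr // in hb; apply: le_trans (ltW hb) _; rewrite ler_pM2r //.
  by apply: le_trans (ler_eXnr _ _) => //; rewrite ?ler1n // ler_nat.
case: (ex_minnP exP) => s /andP[s0 Ds] hmin; exists s => //; rewrite Ds /=.
have s1 : (1 < s)%N.
  rewrite ltn_neqAle eq_sym s0 andbT; apply/eqP => e; move: Ds.
  by rewrite e expr1n mul1r leNgt AD.
have prev : (s.-1)%:R ^+ n * A < D.
  rewrite ltNge; apply/negP => hle; have := hmin s.-1.
  rewrite /P hle andbT -ltnS prednK ?(ltnW s1) // s1 => /(_ isT).
  by rewrite -ltnS prednK ?ltnn // ltnW.
have s2 : (s%:R : R) <= 2 * (s.-1)%:R.
  rewrite -natrM ler_nat -{1}(prednK (ltnW s1)) mul2n -addnn.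
  by rewrite -addn1 leq_add2l -ltnS prednK // ltnW.
apply: le_trans (_ : (2 * (s.-1)%:R) ^+ n * A <= _).
  by rewrite ler_pM2r // lerXn2r // nnegrE ?ler0n ?mulr_ge0.
by rewrite exprMn -mulrA ler_pM2l ?exprn_gt0 // ltW.
Qed.

End Archimedean.

Section Interpolation.
Variable R : realType.

Lemma powR_interp (y c D A : R) (a b : nat) :
  (0 < a + b)%N -> 0 <= y -> 0 <= c -> 0 <= D -> 0 <= A ->
  y ^+ (a + b) <= c ^+ (a + b) * D ^+ a * A ^+ b ->
  y <= c * (D `^ (a%:R / (a + b)%:R) * A `^ (b%:R / (a + b)%:R)).
Proof.
move=> n0 y0 c0 D0 A0 h; set n := (a + b)%N in n0 h *.
have nK : n%:R * (n%:R : R)^-1 = 1 by rewrite mulfV // pnatr_eq0 -lt0n.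
have root (x : R) : 0 <= x -> (x ^+ n) `^ (n%:R^-1) = x.
  by move=> x0; rewrite -powR_mulrn // -(powRrM x) nK powRr1.
have root_pow (x : R) k : 0 <= x -> (x ^+ k) `^ (n%:R^-1) = x `^ (k%:R / n%:R).
  by move=> x0; rewrite -powR_mulrn // -powRrM.
rewrite -(root y y0) -(root c c0) -(root_pow D a D0) -(root_pow A b A0).
rewrite -powRM ?exprn_ge0 // -powRM ?mulr_ge0 ?exprn_ge0 //.
apply: ge0_ler_powR; rewrite ?nnegrE ?invr_ge0 ?ler0n ?mulr_ge0 ?exprn_ge0 //.
by rewrite mulrA.
Qed.

Lemma bounded_interp (N : shift_bound R) g (K D A : R) (a b : nat) :
  (0 < b)%N -> 0 <= D -> 0 < A -> 0 <= K -> N g (K * D) ->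
  (forall s : nat, (0 < s)%N -> N g (K * (s%:R ^+ a * A + D / s%:R ^+ b))) ->
  N g (K * (2 ^+ a + 1) *
       (D `^ (a%:R / (a + b)%:R) * A `^ (b%:R / (a + b)%:R))).
Proof.
move=> b0 D0 A0 K0 hD hs; set n := (a + b)%N.
have n0 : (0 < n)%N by rewrite /n addn_gt0 b0 orbT.
set Z := D `^ _ * A `^ _; have Z0 : 0 <= Z by rewrite mulr_ge0 ?powR_ge0.
have [DA|AD] := leP D A.
  apply: bounded_le hD _; rewrite -mulrA ler_wpM2l //.
  apply: le_trans (_ : Z <= _); last by rewrite ler_peMl // lerDr exprn_ge0.
  have [->|D_neq0] := eqVneq D 0; first by [].
  have eab : a%:R / n%:R + b%:R / n%:R = 1 :> R.
    by rewrite -mulrDl -natrD mulfV // pnatr_eq0 -lt0n.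
  rewrite -{1}(powRr1 D0) -eab powRD ?D_neq0 ?implybT // ler_wpM2l ?powR_ge0 //.
  by apply: ge0_ler_powR; rewrite ?nnegrE ?divr_ge0 ?ler0n // ltW.
have [s s0 /andP[Ds sD]] := exists_scale_between n0 A0 AD.
have S0 : 0 < (s%:R : R) ^+ n by rewrite exprn_gt0 // ltr0n.
apply: bounded_le (hs s s0) _; rewrite -mulrA ler_wpM2l // mulrDl mul1r.
apply: lerD.
  apply: powR_interp; rewrite ?mulr_ge0 ?exprn_ge0 ?ler0n ?(ltW A0) //.
  rewrite exprMn exprAC [A ^+ (a + b)]exprD mulrA -exprMn -/n.
  rewrite exprAC -exprMn ler_pM2r ?exprn_gt0 //.
  by rewrite lerXn2r // nnegrE ?mulr_ge0 ?exprn_ge0 ?ler0n // ltW.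
rewrite -[Z]mul1r; apply: powR_interp;
  rewrite ?divr_ge0 ?exprn_ge0 ?ler0n ?(ltW A0) //.
rewrite expr_div_n exprAC [D ^+ (a + b)]exprD -/n expr1n mul1r.
rewrite ler_pdivrMr ?exprn_gt0 ?ltr0n // -mulrA.
rewrite ler_pM2l ?exprn_gt0 ?(lt_trans A0 AD) //.
by rewrite mulrC -exprMn lerXn2r // nnegrE ?mulr_ge0 ?exprn_ge0 ?ler0n // ltW.
Qed.

End Interpolation.

Section Norms.
Variable R : realType.
Local Open Scope classical_set_scope.
Implicit Types f g : int -> R.

Definition window (a : int) (n : nat) : set int := [set a + (t : nat)%:Z | t in `I_n].

Lemma window_finite a n : finite_set (window a n).
Proof. exact: finite_image (finite_II n). Qed.

Lemma finite_sub_window (X : set int) : finite_set X ->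
  exists a n, X `<=` window a n.
Proof.
move=> finX; pose M := (\max_(x <- finmap.enum_fset (fset_set X)) absz x)%N.
exists (- M%:Z), (M + M).+1 => x Xx.
have hx : (absz x <= M)%N.
  apply: (@leq_bigmax_seq _ _ xpredT (fun x => absz x) x) => //.
  by have := in_fset_set finX x; rewrite mem_set.
by exists (absz (x + M%:Z)); rewrite /= ?inE /=; lia.
Qed.

Lemma fsum_window f a n :
  (\sum_(i \in window a n) (`|f i|)%:E = (\sum_(t < n) `|f (a + t%:Z)|)%:E)%E.
Proof.
rewrite /window fsbig_image; last by move=> x y _ _ /= /addrI [].
by rewrite -fsbig_ord sumEFin.
Qed.

Lemma norm1_ge0 f : (0 <= norm1 f)%E.
Proof. by apply: esum_ge0 => i _; rewrite lee_fin. Qed.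

Lemma normInf_ge0 f : (0 <= normInf f)%E.
Proof.
apply: le_trans (_ : (`|f 0|)%:E <= _)%E; first by rewrite lee_fin.
by apply: ereal_sup_ubound; exists 0.
Qed.

Lemma norm1_l1norm_le f x : norm1 f = x%:E -> l1norm_le f x.
Proof.
move=> e a n; rewrite -lee_fin -fsum_window -e.
by apply: esum_ge; exists (window a n) => //; split => //; apply: window_finite.
Qed.

Lemma l1norm_le_norm1 f b : l1norm_le f b -> (norm1 f <= b%:E)%E.
Proof.
move=> hb; apply: ge_ereal_sup => _ [X [finX _] <-].
have [a [n Xw]] := finite_sub_window finX.
apply: (@le_trans _ _ (\sum_(i \in window a n) (`|f i|)%:E)%E).
  apply: lee_fsum_nneg_subset => //; first exact: window_finite.
  exact/subsetP.
by rewrite fsum_window lee_fin.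
Qed.

Lemma normInf_supnorm_le f x : normInf f = x%:E -> supnorm_le f x.
Proof. by move=> e j; rewrite -lee_fin -e; apply: ereal_sup_ubound; exists j. Qed.

Lemma supnorm_le_normInf f b : supnorm_le f b -> (normInf f <= b%:E)%E.
Proof. by move=> h; apply: ge_ereal_sup => _ [j _ <-]; rewrite lee_fin. Qed.

Lemma shift_act_diff f : shift_act diffp f = Delta f.
Proof.
apply: funext => j; rewrite shift_actD -polyCN shift_actC mulN1r.
by rewrite -[X in shift_act X]expr1 shift_actXn.
Qed.

Lemma shift_act_diffn n f : shift_act (diffp ^+ n) f = DeltaN n f.
Proof.
elim: n => [|n IH]; first by apply: funext => j; rewrite expr0 shift_act1.
by rewrite exprS shift_actM IH shift_act_diff /DeltaN iterS.
Qed.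

End Norms.

Section DistributionFunctions.
Variable R : realType.
Local Open Scope classical_set_scope.
Implicit Types (f F G : int -> R).

Lemma distr_fun_01 F : is_distr_fun F -> forall j, 0 <= F j <= 1.
Proof.
move=> [p [p0 [p1 hF]]] j; have p0E i : (0 <= (p i)%:E)%E by rewrite lee_fin.
apply/andP; split; first by rewrite -lee_fin hF; apply: esum_ge0.
rewrite -lee_fin hF -p1 (esumID [set i | i <= j] [set: int]) // setTI.
by apply: leeDl; apply: esum_ge0.
Qed.

Lemma distr_fun_Delta F : is_distr_fun F ->
  (forall j, 0 <= Delta F j) /\ exists j, Delta F j != 0.
Proof.
move=> [p [p0 [p1 hF]]]; have p0E i : (0 <= (p i)%:E)%E by rewrite lee_fin.
have hD j : Delta F j = p (j + 1).
  have e := hF (j + 1); rewrite (esumID [set j + 1]) // in e.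
  have e1 : [set i | i <= j + 1] `&` [set j + 1] = [set j + 1].
    by apply/seteqP; split => x /=; [case | move=> ->].
  have e2 : [set i | i <= j + 1] `&` ~` [set j + 1] = [set i | i <= j].
    apply/seteqP; split => x /=; rewrite -ltzD1.
      by case => h1 h2; rewrite lt_neqAle h1 andbT; apply/eqP.
    by move=> h; split; [apply: ltW | move=> e0; move: h; rewrite e0 ltxx].
  rewrite e1 e2 esum_set1 // -hF -EFinD in e.
  by rewrite /Delta; case: e => ->; rewrite addrK.
split=> [j|]; first by rewrite hD.
apply/not_existsP => all0; move: p1; rewrite esum1 => [/(congr1 fine)/eqP|i _].
  by rewrite /= eq_sym oner_eq0.
by move/negP: (all0 (i - 1)); rewrite negbK hD subrK => /eqP ->.
Qed.

Variables (m : nat) (m_gt0 : (0 < m)%N).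

Lemma barF_shift_act f j :
  barF m f j = shift_act (meanp m) f (j + (1 - m%:Z)).
Proof.
rewrite /barF /meanp shift_actCM shift_act_sum mulrC; congr (_ * _).
rewrite (reindex_inj rev_ord_inj) /=; apply: eq_bigr => i _.
by rewrite shift_actXn; congr f; have := ltn_ord i; lia.
Qed.

Lemma bounded_barF (N : shift_bound R) f b : N f b -> N (barF m f) b.
Proof.
move=> h; apply: eq_bounded (fun j => esym (barF_shift_act f j)) _.
by rewrite -[b]mul1r; apply/bounded_translate/(op_bound_mean m_gt0).
Qed.

Lemma barF_sub F G j : barF m F j - barF m G j = barF m (fun k => F k - G k) j.
Proof. by rewrite /barF -mulrBl sumrB. Qed.

Lemma barF_Delta f : Delta (barF m f) = barF m (Delta f).
Proof.
apply: funext => j; rewrite /Delta /barF -mulrBl -sumrB.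
by congr (_ / _); apply: eq_bigr => i _; rewrite addrAC.
Qed.

Lemma barF_gt0 f j : (forall k, 0 <= f k) -> 0 < f j -> 0 < barF m f j.
Proof.
move=> f0 fj; rewrite /barF divr_gt0 ?ltr0n //.
case: m m_gt0 => // n _; rewrite big_ord_recl subr0 ltr_wpDr //.
by apply: sumr_ge0 => i _.
Qed.

End DistributionFunctions.

Section ExtendedReals.
Variable R : realType.

(* An infinite [d] or [Ap] makes the right-hand side [+oo], except that
   [0 * +oo = 0]: this is the case [d = 0], [beta < 1]. *)
Lemma le_mul_poweR (L d Ap : \bar R) (beta C : R) :
  0 < beta -> beta <= 1 -> 0 < C -> (0 <= d)%E -> (0 < Ap)%E ->
  (d = 0%E -> (L <= 0)%E) ->
  (beta = 1 -> forall A, Ap = A%:E -> (L <= (C * A)%:E)%E) ->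
  (forall x A, d = x%:E -> Ap = A%:E -> 0 < A ->
     (L <= (C * (x `^ (1 - beta) * A `^ beta))%:E)%E) ->
  (L <= C%:E * poweR d (1 - beta) * poweR Ap beta)%E.
Proof.
move=> b0 b1 C0 d0 Ap0 hd0 h1 hM; have CE : (0 < C%:E)%E by rewrite lte_fin.
case: Ap Ap0 h1 hM => [A| |] Ap0 h1 hM //.
  have A0 : 0 < A by rewrite -lte_fin.
  case: d d0 hd0 h1 hM => [x| |] d0 hd0 h1 hM //.
    by rewrite !poweR_EFin -!EFinM -mulrA; apply: hM.
  have [e1|ne1] := eqVneq beta 1.
    rewrite e1 subrr poweRe0 mule1 poweR_EFin (powRr1 (ltW A0)) -EFinM.
    exact: h1.
  rewrite poweRyr ?subr_eq0 1?eq_sym // gt0_muley // poweR_EFin gt0_mulye ?leey //.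
  by rewrite lte_fin powR_gt0.
rewrite poweRyr ?gt_eqF //.
have := poweR_ge0 d (1 - beta); rewrite le_eqVlt => /orP[/eqP P0|Ppos].
  have /esym/eqP := P0; rewrite poweR_eq0 // => /andP[/eqP /hd0 ? _].
  by rewrite -P0 mule0 mul0e.
by rewrite gt0_muley ?leey // mule_gt0.
Qed.

End ExtendedReals.

Section SmoothingBound.
Variable R : realType.
Variables (l m : nat) (l_gt0 : (0 < l)%N) (m_gt0 : (0 < m)%N).
Implicit Types (f F G : int -> R).

Definition bar_diff F G : int -> R := fun j => barF m F j - barF m G j.

Definition diff_norm F G : \bar R :=
  (norm1 (DeltaN l.+1 (barF m F)) + norm1 (DeltaN l.+1 (barF m G)))%E.

Lemma bar_diffE F G : bar_diff F G = barF m (fun j => F j - G j).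
Proof. by apply: funext => j; rewrite /bar_diff barF_sub. Qed.

Lemma diff_bar_diffE F G : shift_act diffp (bar_diff F G) =
  fun j => Delta (barF m F) j - Delta (barF m G) j.
Proof. by apply: funext => j; rewrite shift_actBr !shift_act_diff. Qed.

Lemma supnorm_bar_diff F G : is_distr_fun F -> is_distr_fun G ->
  supnorm_le (bar_diff F G) 1.
Proof.
move=> /distr_fun_01 hF /distr_fun_01 hG; rewrite bar_diffE.
apply: (bounded_barF m_gt0 (N := sup_bound R)) => j /=.
by have /andP[? ?] := hF j; have /andP[? ?] := hG j; rewrite ler_norml; lra.
Qed.

Lemma supnorm_of_dK F G d : dK F G = d%:E -> supnorm_le (bar_diff F G) d.
Proof.
move/normInf_supnorm_le; rewrite bar_diffE.
exact: (bounded_barF m_gt0 (N := sup_bound R)).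
Qed.

Lemma l1norm_of_dW F G d : dW F G = d%:E -> l1norm_le (bar_diff F G) d.
Proof.
move/norm1_l1norm_le; rewrite bar_diffE.
exact: (bounded_barF m_gt0 (N := l1_bound R)).
Qed.

Lemma l1norm_of_dTV F G d :
  dTV F G = d%:E -> l1norm_le (shift_act diffp (bar_diff F G)) (2 * d).
Proof.
rewrite /dTV; have := norm1_ge0 (fun j => Delta F j - Delta G j).
case E: (norm1 _) => [x| |] x0 //; last first.
  by rewrite gt0_muley // lte_fin invr_gt0 ltr0n.
rewrite -EFinM => -[<-]; rewrite mulrA divff ?mul1r ?pnatr_eq0 //.
rewrite diff_bar_diffE; under [fun j => _]funext do rewrite !barF_Delta barF_sub.
exact: (bounded_barF m_gt0 (N := l1_bound R)) (norm1_l1norm_le E).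
Qed.

Lemma l1norm_of_diff_norm F G A : diff_norm F G = A%:E ->
  l1norm_le (shift_act (diffp ^+ l.+1) (bar_diff F G)) A.
Proof.
rewrite /diff_norm; case Eu: (norm1 _) => [x| |]; case Ev: (norm1 _) => [y| |] //.
move=> [<-]; have hu : l1_bound R _ x := norm1_l1norm_le Eu.
have := boundedZ (-1) (norm1_l1norm_le Ev : l1_bound R _ y).
rewrite normrN1 mul1r => hv; apply: eq_bounded (boundedD hu hv) => j.
by rewrite shift_actBr !shift_act_diffn mulN1r.
Qed.

Lemma dloc_le F G x : supnorm_le (shift_act diffp (bar_diff F G)) x ->
  (dloc (barF m F) (barF m G) <= x%:E)%E.
Proof. by rewrite diff_bar_diffE; apply: supnorm_le_normInf. Qed.

Lemma dK_le F G x :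
  supnorm_le (bar_diff F G) x -> (dK (barF m F) (barF m G) <= x%:E)%E.
Proof. exact: supnorm_le_normInf. Qed.

Lemma dTV_le F G x : l1norm_le (shift_act diffp (bar_diff F G)) x ->
  (dTV (barF m F) (barF m G) <= x%:E)%E.
Proof.
move=> h; have x0 := l1norm_le_ge0 h; move: h; rewrite diff_bar_diffE.
move/l1norm_le_norm1 => h; have h2 : (0 <= (2^-1 : R))%R by rewrite invr_ge0 ler0n.
apply: le_trans (lee_wpmul2l _ h) _; first by rewrite lee_fin.
by rewrite -EFinM lee_fin ler_piMl // invf_le1 ?ler1n ?ltr0n.
Qed.

Lemma diff_norm_gt0 F G : is_distr_fun F -> (0 < diff_norm F G)%E.
Proof.
move=> hF; apply: (@lt_le_trans _ _ (norm1 (DeltaN l.+1 (barF m F)))); last first.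
  by rewrite leeDl ?norm1_ge0.
rewrite lt_def norm1_ge0 andbT; apply/eqP => /norm1_l1norm_le h0.
have [Dge0 [j Dj]] := distr_fun_Delta hF.
have hS : supnorm_le (barF m F) 1.
  apply: (bounded_barF m_gt0 (N := sup_bound R)) => i /=.
  by have /andP[? ?] := distr_fun_01 hF i; rewrite ger0_norm.
rewrite -shift_act_diffn -(prednK l_gt0) in h0.
have : Delta (barF m F) j == 0.
  rewrite -normr_le0 -shift_act_diff.
  apply: (le0_le_div_nat (c := smoothing_const (R := R) l.-1)) => s s0.
  have := sup_diff_le_smooth_sup s0 hS h0 j.
  by rewrite mulr0 add0r mul1r.
by rewrite barF_Delta gt_eqF // barF_gt0 // lt_def Dj Dge0.
Qed.

Lemma supnorm_diff_le_l1_diff2 (h : int -> R) (D A : R) :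
  supnorm_le h D -> l1norm_le (shift_act (diffp ^+ 2) h) A ->
  supnorm_le (shift_act diffp h) (smoothing_const 0 * A).
Proof.
move=> hD hA j; rewrite -subr_le0.
apply: (le0_le_div_nat (c := smoothing_const 0 * D)) => s s0.
have := sup_diff_le_smooth_sup s0 (k := 0) hD hA j.
rewrite expr0 mul1r mulrDr -mulrA; lra.
Qed.

(* [a = 0] is [beta = 1]: then [d2 F G] may be infinite and only the
   smoothness term can bound [d1]. *)
Lemma smoothing_bound_interp (d1 d2 : (int -> R) -> (int -> R) -> \bar R)
    (beta K : R) (a b : nat) :
  (0 < b)%N -> 1 <= K -> beta = b%:R / (a + b)%:R ->
  (forall F G, (0 <= d2 F G)%E) ->
  (forall F G, is_distr_fun F -> is_distr_fun G ->
    [/\ forall d, d2 F G = d%:E -> (d1 (barF m F) (barF m G) <= (K * d)%:E)%E,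
        (a = 0)%N -> forall A, diff_norm F G = A%:E ->
          (d1 (barF m F) (barF m G) <= (K * A)%:E)%E &
        forall d A, d2 F G = d%:E -> diff_norm F G = A%:E -> 0 < A ->
          (d1 (barF m F) (barF m G) <= (K * (2 ^+ a + 1) *
            (d `^ (a%:R / (a + b)%:R) * A `^ (b%:R / (a + b)%:R)))%:E)%E]) ->
  smoothing_bound d1 d2 beta l m.
Proof.
move=> b_gt0 K1 ebeta d2_ge0 H.
have ab0 : ((a + b)%:R : R) != 0 by rewrite pnatr_eq0 -lt0n addn_gt0 b_gt0 orbT.
have K0 : 0 < K by apply: lt_le_trans K1.
have C1 : K <= K * (2 ^+ a + 1) by rewrite ler_peMr ?(ltW K0) // lerDr exprn_ge0.
exists (K * (2 ^+ a + 1)); split; first by apply: lt_le_trans C1.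
move=> F G hF hG; have [htriv hbeta1 hmain] := H F G hF hG.
have Ap0 : (0 < diff_norm F G)%E by apply: diff_norm_gt0.
have e1 : 1 - beta = a%:R / (a + b)%:R.
  by rewrite ebeta natrD; field; rewrite -natrD.
apply: le_mul_poweR.
- by rewrite ebeta divr_gt0 ?ltr0n // addn_gt0 b_gt0 orbT.
- by rewrite ebeta ler_pdivrMr ?mul1r ?ler_nat ?leq_addl // ltr0n addn_gt0 b_gt0 orbT.
- by apply: lt_le_trans C1.
- exact: d2_ge0.
- exact: Ap0.
- by move=> /htriv; rewrite mulr0.
- move=> beta1 A eA; apply: le_trans (hbeta1 _ A eA) _.
    move: beta1; rewrite ebeta => /(congr1 (fun x => x * (a + b)%:R)).
    rewrite divfK // mul1r => /eqP; rewrite eqr_nat -{1}[b]add0n eqn_add2r.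
    by move/eqP.
  rewrite lee_fin ler_wpM2r //.
  by move: Ap0; rewrite /diff_norm eA lte_fin => /ltW.
- by move=> d A ed eA A0; rewrite e1 ebeta; apply: hmain.
Qed.

Lemma smoothing_bound_dK_dW : smoothing_bound (@dK R) (@dW R) (l.+1%:R^-1) l m.
Proof.
apply: (smoothing_bound_interp (a := l) (b := 1) (K := smoothing_const l)) => //.
- exact: smoothing_const_ge1.
- by rewrite addn1 mul1r.
- by move=> F G; apply: norm1_ge0.
move=> F G _ _; set K := smoothing_const l.
have base d : dW F G = d%:E -> supnorm_le (bar_diff F G) (K * d).
  move=> /l1norm_of_dW /l1norm_le_supnorm hd.
  apply: (bounded_le (s := sup_bound R) hd).
  by rewrite ler_peMl ?smoothing_const_ge1 // (supnorm_le_ge0 hd).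
split=> [d /base /dK_le //|l0|d A hd hA A0]; first by move: l_gt0; rewrite l0.
apply/dK_le/(bounded_interp (N := sup_bound R)) => //.
- exact: l1norm_le_ge0 (l1norm_of_dW hd).
- exact: le_trans ler01 (smoothing_const_ge1 R l).
- exact: base.
move=> s s0; rewrite expr1.
by have := sup_le_smooth_l1 s0 (l1norm_of_dW hd) (l1norm_of_diff_norm hA).
Qed.

Lemma smoothing_bound_dTV_dW : smoothing_bound (@dTV R) (@dW R) (l.+1%:R^-1) l m.
Proof.
apply: (smoothing_bound_interp (a := l) (b := 1) (K := smoothing_const l)) => //.
- exact: smoothing_const_ge1.
- by rewrite addn1 mul1r.
- by move=> F G; apply: norm1_ge0.
move=> F G _ _; set K := smoothing_const l.
have [K2 _ _ _ _] := smoothing_const_ge R l.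
have base d : dW F G = d%:E -> l1norm_le (shift_act diffp (bar_diff F G)) (K * d).
  move=> /l1norm_of_dW hd; have := op_bound_diff (N := l1_bound R) hd.
  by move/bounded_le; apply; rewrite ler_wpM2r // (l1norm_le_ge0 hd).
split=> [d /base /dTV_le //|l0|d A hd hA A0]; first by move: l_gt0; rewrite l0.
apply/dTV_le/(bounded_interp (N := l1_bound R)) => //.
- exact: l1norm_le_ge0 (l1norm_of_dW hd).
- exact: le_trans ler01 (smoothing_const_ge1 R l).
- exact: base.
move=> s s0; rewrite expr1.
by have := l1_diff_le_smooth_l1 s0 (l1norm_of_dW hd) (l1norm_of_diff_norm hA).
Qed.

Lemma smoothing_bound_dloc_dK : smoothing_bound (@dloc R) (@dK R) (l%:R^-1) l m.
Proof.
set k := l.-1; have lk : l = k.+1 by rewrite prednK.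
apply: (smoothing_bound_interp (a := k) (b := 1) (K := smoothing_const k)) => //.
- exact: smoothing_const_ge1.
- by rewrite lk addn1 mul1r.
- by move=> F G; apply: normInf_ge0.
move=> F G hF hG; set K := smoothing_const k.
have [K2 _ _ _ _] := smoothing_const_ge R k.
have base d : dK F G = d%:E -> supnorm_le (shift_act diffp (bar_diff F G)) (K * d).
  move=> /supnorm_of_dK hd; have := op_bound_diff (N := sup_bound R) hd.
  by move/bounded_le; apply; rewrite ler_wpM2r // (supnorm_le_ge0 hd).
split=> [d /base /dloc_le //|k0 A /l1norm_of_diff_norm hA|d A hd hA A0].
  rewrite lk k0 in hA; rewrite /K k0; apply: dloc_le.
  exact: supnorm_diff_le_l1_diff2 (supnorm_bar_diff hF hG) hA.
apply/dloc_le/(bounded_interp (N := sup_bound R)) => //.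
- exact: supnorm_le_ge0 (supnorm_of_dK hd).
- exact: le_trans ler01 (smoothing_const_ge1 R k).
- exact: base.
move=> s s0; rewrite expr1; have := l1norm_of_diff_norm hA; rewrite lk => hA'.
by have := sup_diff_le_smooth_sup s0 (supnorm_of_dK hd) hA'.
Qed.

Lemma smoothing_bound_dloc_dW : smoothing_bound (@dloc R) (@dW R) (2 / l.+1%:R) l m.
Proof.
set k := l.-1; have lk : l = k.+1 by rewrite prednK.
apply: (smoothing_bound_interp (a := k) (b := 2) (K := smoothing_const k)) => //.
- exact: smoothing_const_ge1.
- by rewrite lk addn2.
- by move=> F G; apply: norm1_ge0.
move=> F G hF hG; set K := smoothing_const k.
have [K2 _ _ _ _] := smoothing_const_ge R k.
have base d : dW F G = d%:E -> supnorm_le (shift_act diffp (bar_diff F G)) (K * d).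
  move=> /l1norm_of_dW /l1norm_le_supnorm hd.
  have := op_bound_diff (N := sup_bound R) hd.
  by move/bounded_le; apply; rewrite ler_wpM2r // (supnorm_le_ge0 hd).
split=> [d /base /dloc_le //|k0 A /l1norm_of_diff_norm hA|d A hd hA A0].
  rewrite lk k0 in hA; rewrite /K k0; apply: dloc_le.
  exact: supnorm_diff_le_l1_diff2 (supnorm_bar_diff hF hG) hA.
apply/dloc_le/(bounded_interp (N := sup_bound R)) => //.
- exact: l1norm_le_ge0 (l1norm_of_dW hd).
- exact: le_trans ler01 (smoothing_const_ge1 R k).
- exact: base.
move=> s s0; have := l1norm_of_diff_norm hA; rewrite lk => hA'.
by have := sup_diff_le_smooth_l1 s0 (l1norm_of_dW hd) hA'.
Qed.

Lemma smoothing_bound_dloc_dTV : smoothing_bound (@dloc R) (@dTV R) (l%:R^-1) l m.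
Proof.
set k := l.-1; have lk : l = k.+1 by rewrite prednK.
have K1 := smoothing_const_ge1 R k.
apply: (smoothing_bound_interp (a := k) (b := 1) (K := 2 * smoothing_const k)) => //.
- lra.
- by rewrite lk addn1 mul1r.
- by move=> F G; rewrite /dTV mule_ge0 ?norm1_ge0 // lee_fin invr_ge0 ler0n.
move=> F G hF hG; set K := smoothing_const k.
have K0 : 0 <= K := le_trans ler01 K1.
have base d :
    dTV F G = d%:E -> supnorm_le (shift_act diffp (bar_diff F G)) (2 * K * d).
  move=> /l1norm_of_dTV /l1norm_le_supnorm hd.
  apply: (bounded_le (s := sup_bound R) hd); rewrite -mulrA mulrCA.
  exact: ler_peMl (supnorm_le_ge0 hd) K1.
split=> [d /base /dloc_le //|k0 A /l1norm_of_diff_norm hA|d A hd hA A0].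
  rewrite lk k0 in hA; apply: dloc_le; have A0 := l1norm_le_ge0 hA.
  have h := supnorm_diff_le_l1_diff2 (supnorm_bar_diff hF hG) hA.
  apply: (bounded_le (s := sup_bound R) h); rewrite /K k0.
  by have := smoothing_const_ge1 R 0; nra.
have hD := l1norm_of_dTV hd.
have := l1norm_of_diff_norm hA; rewrite lk exprSr shift_actM => hA'.
apply/dloc_le/(bounded_interp (N := sup_bound R)) => //.
- by have := l1norm_le_ge0 hD; lra.
- lra.
- exact: base.
move=> s s0; rewrite expr1; have h := sup_le_smooth_l1 s0 hD hA'.
apply: (bounded_le (s := sup_bound R) h).
have -> : 2 * d / s%:R = 2 * (d / s%:R) by rewrite mulrA.
have u0 : 0 <= s%:R ^+ k * A by rewrite mulr_ge0 ?exprn_ge0 ?ler0n ?(ltW A0).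
have := mulr_ge0 K0 u0; rewrite -/K; nra.
Qed.

End SmoothingBound.

Theorem theorem2 (R : realType) (l m : nat) (hl : (1 <= l)%N) (hm : (1 <= m)%N) :
  [/\ smoothing_bound (@dloc R) (@dTV R) (l%:R^-1) l m,
      smoothing_bound (@dloc R) (@dK R) (l%:R^-1) l m,
      smoothing_bound (@dloc R) (@dW R) (2 / l.+1%:R) l m,
      smoothing_bound (@dTV R) (@dW R) (l.+1%:R^-1) l m &
      smoothing_bound (@dK R) (@dW R) (l.+1%:R^-1) l m].
Proof.
split.
- exact: smoothing_bound_dloc_dTV.
- exact: smoothing_bound_dloc_dK.
- exact: smoothing_bound_dloc_dW.
- exact: smoothing_bound_dTV_dW.
- exact: smoothing_bound_dK_dW.
Qed.
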